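(* (i) Let $A\in\mathbb K^{n\times n}$ be $s$-quasiseparable and let $t\ge 2s$ with $n=2^Kt$. Then $A$ has a $t$-HSS representation; for $t=2s$ this representation consists of $18ns$ field elements up to lower-order terms. (ii) (Optimality of $2s$.) Let $K\ge 3$, $n=2^Kt$, and suppose $A\in\mathbb K^{n\times n}$ has a $t$-HSS representation. Then $t\ge \operatorname{rank}\begin{bmatrix}A_{K;3..4,\,1..2} & A_{K;3..4,\,5..6}\end{bmatrix}$, where $A_{K;3..4,\,1..2}$ denotes the submatrix formed by the level-$K$ blocks in block rows $3,4$ and block columns $1,2$ (similarly for columns $5,6$). For an $s$-quasiseparable matrix this rank is at most $2s$, and there exist $s$-quasiseparable matrices for which it equals $2s$; for these, every $t$-HSS representation has $t\ge 2s$.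
   Context: A matrix $A\in\mathbb K^{n\times n}$ is $s$-quasiseparable if for every $k\in\{1,\dots,n\}$, $\operatorname{rank}(A[1..k,\,k+1..n])\le s$ and $\operatorname{rank}(A[k+1..n,\,1..k])\le s$. Let $n=2^Kt$. For $k\in\{0,\dots,K\}$, the level-$k$ block division of $A$ is $A=(A_{k;i,j})_{1\le i,j\le 2^k}$ with all blocks of size $n/2^k$. A $t$-HSS representation of $A$ consists of $t\times t$ matrices $U_{K;i},V_{K;i},D_i$ ($1\le i\le 2^K$), $R_{k;i},W_{k;i}$ ($2\le k\le K$, $1\le i\le 2^k$), $B_{k;i}$ ($1\le k\le K$, $1\le i\le 2^k$) such that $A_{K;i,i}=D_i$ for all $i$, and such that, defining recursively for $k=K-1,\dots,1$ and $1\le i\le 2^k$ $U_{k;i}=\begin{bmatrix}U_{k+1;2i-1}R_{k+1;2i-1}\\ U_{k+1;2i}R_{k+1;2i}\end{bmatrix}$, $V_{k;i}=\begin{bmatrix}W_{k+1;2i-1}V_{k+1;2i-1} & W_{k+1;2i}V_{k+1;2i}\end{bmatrix}$, one has for all $1\le k\le K$ and $1\le i\le 2^{k-1}$: $A_{k;2i-1,2i}=U_{k;2i-1}B_{k;2i-1}V_{k;2i}$ and $A_{k;2i,2i-1}=U_{k;2i}B_{k;2i}V_{k;2i-1}$. *)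

From HB Require Import structures.
From mathcomp Require Import all_boot all_order all_algebra.
Set Implicit Arguments. Unset Strict Implicit. Unset Printing Implicit Defensive.
Import GRing.Theory.
Local Open Scope ring_scope.

(* Conventions: all indices are 0-based.  A level-k block index i in the
   paper (1-based, 1 <= i <= 2^k) corresponds to i-1 here.  Blocks are
   indexed by the "depth" d = K - k, so that a level-k block has size
   2^(K-k) * t = 2^d * t. *)

(* Total entry access with natural-number indices (0 outside the matrix). *)
Definition getn (F : fieldType) (m n : nat) (A : 'M[F]_(m, n)) (r c : nat) : F :=
  match (insub r : option 'I_m), (insub c : option 'I_n) with
  | Some i, Some j => A i j
  | _, _ => 0
  end.

Definition quasiseparable (F : fieldType) (n s : nat) (A : 'M[F]_n) : Prop :=
  forall k : nat, (0 < k <= n)%N ->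
    (\rank (\matrix_(i < k, j < n - k) getn A i (k + j)) <= s)%N /\
    (\rank (\matrix_(i < n - k, j < k) getn A (k + i) j) <= s)%N.

Lemma bs0 (t : nat) : (2 ^ 0 * t = t)%N.
Proof. by rewrite expn0 mul1n. Qed.

Lemma bsS (d t : nat) : (2 ^ d.+1 * t = 2 ^ d * t + 2 ^ d * t)%N.
Proof. by rewrite expnS -mulnA mul2n -addnn. Qed.

(* Block (i, j) (0-based) of the block division of A into blocks of size
   2^d * t.  With n = 2^K t and d = K - k this is A_{k; i+1, j+1}. *)
Definition blk (F : fieldType) (n t : nat) (A : 'M[F]_n) (d i j : nat)
  : 'M[F]_(2 ^ d * t) :=
  \matrix_(a < 2 ^ d * t, b < 2 ^ d * t)
     getn A (i * (2 ^ d * t) + a) (j * (2 ^ d * t) + b).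

(* The nested bases: hss_U K UK R d i = U_{K-d; i+1} of the paper, built
   recursively from the leaf generators UK i = U_{K;i+1} and the
   translation matrices R k i = R_{k;i+1}. *)
Fixpoint hss_U (F : fieldType) (K t : nat) (UK : nat -> 'M[F]_t)
  (R : nat -> nat -> 'M[F]_t) (d : nat) : nat -> 'M[F]_(2 ^ d * t, t) :=
  match d with
  | 0 => fun i => castmx (esym (bs0 t), erefl) (UK i)
  | d'.+1 => fun i =>
      castmx (esym (bsS d' t), erefl)
        (col_mx (hss_U K UK R d' (2 * i) *m R (K - d')%N (2 * i))
                (hss_U K UK R d' (2 * i + 1) *m R (K - d')%N (2 * i + 1)))
  end.

(* hss_V K VK W d i = V_{K-d; i+1} of the paper. *)
Fixpoint hss_V (F : fieldType) (K t : nat) (VK : nat -> 'M[F]_t)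
  (W : nat -> nat -> 'M[F]_t) (d : nat) : nat -> 'M[F]_(t, 2 ^ d * t) :=
  match d with
  | 0 => fun i => castmx (erefl, esym (bs0 t)) (VK i)
  | d'.+1 => fun i =>
      castmx (erefl, esym (bsS d' t))
        (row_mx (W (K - d')%N (2 * i) *m hss_V K VK W d' (2 * i))
                (W (K - d')%N (2 * i + 1) *m hss_V K VK W d' (2 * i + 1)))
  end.

(* Only the values at the indices listed in the paper matter:
   UK i, VK i, D i for i < 2^K; R k i, W k i for 2 <= k <= K, i < 2^k;
   B k i for 1 <= k <= K, i < 2^k. *)
Definition hss_rep (F : fieldType) (K t : nat) (A : 'M[F]_(2 ^ K * t))
  (UK VK D : nat -> 'M[F]_t) (R W B : nat -> nat -> 'M[F]_t) : Prop :=
  (forall i, (i < 2 ^ K)%N ->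
     blk t A 0 i i = castmx (esym (bs0 t), esym (bs0 t)) (D i)) /\
  (forall k, (1 <= k <= K)%N -> forall i, (i < 2 ^ (k - 1))%N ->
     blk t A (K - k) (2 * i) (2 * i + 1) =
       hss_U K UK R (K - k) (2 * i) *m B k (2 * i) *m hss_V K VK W (K - k) (2 * i + 1)
     /\
     blk t A (K - k) (2 * i + 1) (2 * i) =
       hss_U K UK R (K - k) (2 * i + 1) *m B k (2 * i + 1) *m hss_V K VK W (K - k) (2 * i)).

Definition has_HSS (F : fieldType) (K t : nat) (A : 'M[F]_(2 ^ K * t)) : Prop :=
  exists (UK VK D : nat -> 'M[F]_t) (R W B : nat -> nat -> 'M[F]_t),
    hss_rep A UK VK D R W B.

(* Number of field elements in a t-HSS representation with K levels:
   3 * 2^K leaf matrices U, V, D; 2 * sum_{k=2}^K 2^k matrices R, W;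
   sum_{k=1}^K 2^k matrices B; each t x t. *)
Definition hss_size (K t : nat) : nat :=
  (3 * 2 ^ K + 2 * (\sum_(2 <= k < K.+1) 2 ^ k) + \sum_(1 <= k < K.+1) 2 ^ k)
    * (t * t).

(* [A_{K;3..4,1..2}  A_{K;3..4,5..6}] (level-K blocks of size t). *)
Definition sep_mx (F : fieldType) (K t : nat) (A : 'M[F]_(2 ^ K * t))
  : 'M[F]_(2 * t, 2 * t + 2 * t) :=
  row_mx (\matrix_(i < 2 * t, j < 2 * t) getn A (2 * t + i) j)
         (\matrix_(i < 2 * t, j < 2 * t) getn A (2 * t + i) (4 * t + j)).

From HB Require Import structures.
From mathcomp Require Import all_boot all_order all_algebra.
From mathcomp Require Import zify.
Set Implicit Arguments. Unset Strict Implicit. Unset Printing Implicit Defensive.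
Import GRing.Theory.

(* A t-HSS representation exists as soon as every block column of A with its
   diagonal block removed ([offdiag_col]), and likewise for A^T, has rank at most
   t.  Take for V_{k;i} a t-row matrix spanning the row space of that block
   column: the two halves of the block column of i at level k lie in the block
   columns of its two children at level k+1, which yields the translation
   matrices W, and every off-diagonal block, lying in the row space of V and (by
   transposition) in the column space of U, factors as U B V.  For an
   s-quasiseparable matrix such a block column is the sum of its parts above and
   below the diagonal block, each a submatrix of an off-diagonal block bounded by
   quasiseparability, so its rank is at most 2s.

   Conversely, in a t-HSS representation both A_{K;3..4,1..2} = A_{K-1;2,1} and
   A_{K;3..4,5..6}, which lies in the lower half of A_{K-2;1,2}, have their
   columns in the span of the t columns of U_{K-1;2}.  Two s x s identity blocks
   placed in these two positions give an s-quasiseparable matrix for which this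
   rank is 2s. *)

Section HSS.
Variable F : fieldType.
Local Open Scope ring_scope.

Lemma getn_mx m n (h : nat -> nat -> F) r c :
  getn (\matrix_(i < m, j < n) h i j) r c = if (r < m)%N && (c < n)%N then h r c else 0.
Proof.
rewrite /getn; case: insubP => [i -> <- | /negbTE ->] //=.
by case: insubP => [j -> <- | /negbTE ->] //=; rewrite mxE.
Qed.

Lemma getnE m n (A : 'M[F]_(m, n)) (i : 'I_m) (j : 'I_n) : getn A i j = A i j.
Proof. by rewrite /getn !valK. Qed.

Lemma getn_out m n (A : 'M[F]_(m, n)) r c : (m <= r)%N || (n <= c)%N -> getn A r c = 0.
Proof.
rewrite /getn; case/orP => ?; first by rewrite insubN // -leqNgt.
by case: insub; rewrite ?insubN // -leqNgt.
Qed.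

Lemma getn_tr m n (A : 'M[F]_(m, n)) r c : getn A^T r c = getn A c r.
Proof. by rewrite /getn; case: (insub r) => [i|]; case: (insub c) => [j|] //; rewrite mxE. Qed.

Lemma getn1 s a b : getn (1%:M : 'M[F]_s) a b = ((a < s) && (a == b))%N%:R.
Proof.
have [a_lt|a_ge] := ltnP a s; last by rewrite getn_out ?a_ge.
have [b_lt|b_ge] := ltnP b s.
  by rewrite -[a]/(val (Ordinal a_lt)) -[b]/(val (Ordinal b_lt)) getnE mxE.
by rewrite getn_out ?b_ge ?orbT // (_ : (a == b) = false) ?andbF //; lia.
Qed.

Definition sel_mx m1 m2 (f : nat -> nat) : 'M[F]_(m1, m2) :=
  \matrix_(i, a) (f i == a :> nat)%:R.

Lemma sum_indicator_ord m x (G : 'I_m -> F) :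
  \sum_(a < m) (x == a :> nat)%:R * G a = if insub x is Some a then G a else 0.
Proof.
case: insubP => [a0 _ <- | x_out].
  rewrite (bigD1 a0) //= eqxx mul1r big1 ?addr0 // => a.
  by rewrite eq_sym -val_eqE => /negbTE ->; rewrite mul0r.
rewrite big1 // => a _; case: eqP => [xa|]; last by rewrite mul0r.
by rewrite xa ltn_ord in x_out.
Qed.

(* Since [getn] vanishes out of range, a reindexing may also blank out rows
   and columns by sending them outside [N]. *)
Lemma reindex_mxE m1 n1 m2 n2 (M : 'M[F]_(m1, n1)) (N : 'M[F]_(m2, n2)) (f g : nat -> nat) :
  (forall i j, M i j = getn N (f i) (g j)) ->
  M = sel_mx m1 m2 f *m N *m (sel_mx n1 n2 g)^T.
Proof.
move=> DM; apply/matrixP => i j; rewrite DM !mxE.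
under eq_bigr => b _ do rewrite !mxE.
under eq_bigr => b _ do under eq_bigr => a _ do rewrite !mxE.
under eq_bigr => b _ do rewrite sum_indicator_ord mulrC.
by rewrite sum_indicator_ord /getn; case: (insub (f i)) => [a|]; case: (insub (g j)).
Qed.

Lemma mxrank_reindex m1 n1 m2 n2 (M : 'M[F]_(m1, n1)) (N : 'M[F]_(m2, n2)) (f g : nat -> nat) :
  (forall i j, M i j = getn N (f i) (g j)) -> (\rank M <= \rank N)%N.
Proof.
move/reindex_mxE => ->.
exact: leq_trans (mxrankM_maxl _ _) (mxrankM_maxr _ _).
Qed.

Lemma submx_reindex m1 m2 n (M : 'M[F]_(m1, n)) (N : 'M[F]_(m2, n)) (f : nat -> nat) :
  (forall i j, M i j = getn N (f i) j) -> (M <= N)%MS.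
Proof.
move=> DM; rewrite (@reindex_mxE _ _ _ _ M N f id DM).
have -> : sel_mx n n id = 1%:M by apply/matrixP => i j; rewrite !mxE.
by rewrite trmx1 mulmx1 submxMl.
Qed.

Lemma quasiseparable_tr n s (A : 'M[F]_n) : quasiseparable s A -> quasiseparable s A^T.
Proof.
move=> qsA k k_in; have [rUR rLL] := qsA k k_in.
split; rewrite -mxrank_tr; [apply: leq_trans rLL | apply: leq_trans rUR];
  by apply: (mxrank_reindex (f := id) (g := id)) => i j /=; rewrite getnE !mxE getn_tr.
Qed.

Lemma mxrank_qs_upper n s (A : 'M[F]_n) k p q (M : 'M[F]_(p, q)) (f g : nat -> nat) :
  quasiseparable s A ->
  (forall i j, M i j = if (f i < k <= g j)%N then getn A (f i) (g j) else 0) ->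
  (\rank M <= s)%N.
Proof.
move=> qsA DM.
have [/andP[k_gt0 k_lt_n] | k_out] := boolP (0 < k < n)%N; last first.
  have -> : M = 0; last by rewrite mxrank0.
  apply/matrixP => i j; rewrite DM mxE; case: ifP => // /andP[? ?].
  by rewrite getn_out //; apply/orP; right; lia.
have /qsA[rUR _] : (0 < k <= n)%N by lia.
apply: leq_trans rUR.
apply: (mxrank_reindex (f := fun i => if (f i < k)%N then f i else k)
                       (g := fun j => if (k <= g j)%N then (g j - k)%N else n)) => i j.
rewrite DM (getn_mx _ _ (fun r c => getn A r (k + c))).
case: (ltnP (f i) k) => fi; case: (leqP k (g j)) => gj /=;
  rewrite ?ltnn ?(ltnNge n) ?leq_subr ?andbF //.
rewrite fi subnKC //=; case: ltnP => // gj_n.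
by rewrite getn_out //; apply/orP; right; lia.
Qed.

Lemma mxrank_qs_lower n s (A : 'M[F]_n) k p q (M : 'M[F]_(p, q)) (f g : nat -> nat) :
  quasiseparable s A ->
  (forall i j, M i j = if (g j < k <= f i)%N then getn A (f i) (g j) else 0) ->
  (\rank M <= s)%N.
Proof.
move=> qsA DM; rewrite -mxrank_tr.
apply: (mxrank_qs_upper (quasiseparable_tr qsA) (f := g) (g := f)) => i j.
by rewrite mxE DM getn_tr.
Qed.

Lemma mxrank_qs_offdiag n s (A : 'M[F]_n) k1 k2 p q (M : 'M[F]_(p, q))
    (f g : nat -> nat) :
  quasiseparable s A ->
  (forall i j, M i j = if (f i < k1 <= g j)%N || (g j < k2 <= f i)%N
                       then getn A (f i) (g j) else 0) ->
  (\rank M <= 2 * s)%N.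
Proof.
move=> qsA DM.
pose Mu := \matrix_(i < p, j < q) if (f i < k1 <= g j)%N then getn A (f i) (g j) else 0.
pose Ml := \matrix_(i < p, j < q) if (g j < k2 <= f i)%N then getn A (f i) (g j) else 0.
have -> : M = Mu + Ml.
  apply/matrixP => i j; rewrite DM !mxE.
  have [up|_] := boolP (f i < k1 <= g j)%N; have [lo|_] := boolP (g j < k2 <= f i)%N;
    rewrite ?addr0 ?add0r //; lia.
rewrite mul2n -addnn; apply: leq_trans (mxrank_add _ _) (leq_add _ _).
  by apply: (mxrank_qs_upper qsA (f := f) (g := g)) => i j; rewrite mxE.
by apply: (mxrank_qs_lower qsA (f := f) (g := g)) => i j; rewrite mxE.
Qed.

Lemma sep_mxE K t (A : 'M[F]_(2 ^ K * t)) i j :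
  sep_mx A i j = getn A (2 * t + i)%N (if j < 2 * t then j : nat else 2 * t + j)%N.
Proof.
rewrite /sep_mx mxE; case: splitP => j' ->; rewrite mxE ?ltn_ord //.
by congr getn; lia.
Qed.

Lemma getn_sep_mx K t (A : 'M[F]_(2 ^ K * t)) r c :
  (r < 2 * t)%N -> (c < 2 * t + 2 * t)%N ->
  getn (sep_mx A) r c = getn A (2 * t + r)%N (if c < 2 * t then c else 2 * t + c)%N.
Proof.
by move=> r_lt c_lt; rewrite -[r]/(val (Ordinal r_lt)) -[c]/(val (Ordinal c_lt)) getnE sep_mxE.
Qed.

Lemma mxrank_sep_mx_qs K t s (A : 'M[F]_(2 ^ K * t)) :
  quasiseparable s A -> (\rank (sep_mx A) <= 2 * s)%N.
Proof.
move=> qsA; apply: (mxrank_qs_offdiag (k1 := 4 * t) (k2 := 2 * t) (f := fun i => (2 * t + i)%N)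
  (g := fun j => (if j < 2 * t then j : nat else 2 * t + j)%N) qsA) => i j.
rewrite sep_mxE; have := ltn_ord i; case: ifP => ? ?; rewrite ifT //; lia.
Qed.

Lemma castmx_submx m1 m2 n1 n2 (e : n1 = n2) (X : 'M[F]_(m1, n1)) (Y : 'M[F]_(m2, n1)) :
  (X <= Y)%MS -> (castmx (erefl, e) X <= castmx (erefl, e) Y)%MS.
Proof. by case: n2 / e; rewrite !castmx_id. Qed.

Lemma castmx_mulmx m1 m2 n p1 p2 (e1 : m1 = m2) (e2 : p1 = p2)
    (X : 'M[F]_(m1, n)) (Y : 'M[F]_(n, p1)) :
  castmx (e1, e2) (X *m Y) = castmx (e1, erefl) X *m castmx (erefl, e2) Y.
Proof. by case: m2 / e1; case: p2 / e2; rewrite !castmx_id. Qed.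

Lemma lsubmxS m1 m2 n1 n2 (X : 'M[F]_(m1, n1 + n2)) (Y : 'M[F]_(m2, n1 + n2)) :
  (X <= Y)%MS -> (lsubmx X <= lsubmx Y)%MS.
Proof. by case/submxP => D ->; rewrite -mulmx_lsub submxMl. Qed.

Lemma rsubmxS m1 m2 n1 n2 (X : 'M[F]_(m1, n1 + n2)) (Y : 'M[F]_(m2, n1 + n2)) :
  (X <= Y)%MS -> (rsubmx X <= rsubmx Y)%MS.
Proof. by case/submxP => D ->; rewrite -mulmx_rsub submxMl. Qed.

Definition pad_base m n t (H : 'M[F]_(m, n)) : 'M[F]_(t, n) := pid_mx (\rank H) *m row_base H.

Lemma pad_base_sub m n t (H : 'M[F]_(m, n)) : (pad_base t H <= H)%MS.
Proof. by rewrite (submx_trans (submxMl _ _)) ?eq_row_base. Qed.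

Lemma sub_pad_base m n t (H : 'M[F]_(m, n)) : (\rank H <= t)%N -> (H <= pad_base t H)%MS.
Proof.
move=> rH; rewrite -{1}(eq_row_base H); apply/submxP; exists (pid_mx (\rank H)).
by rewrite mulmxA mul_pid_mx minnn (minn_idPr rH) pid_mx_1 mul1mx.
Qed.

Definition core_mx p q t (U : 'M[F]_(p, t)) (V : 'M[F]_(t, q)) (M : 'M[F]_(p, q)) : 'M[F]_t :=
  (pinvmx U^T)^T *m M *m pinvmx V.

Lemma core_mxK p q t (U : 'M[F]_(p, t)) (V : 'M[F]_(t, q)) (M : 'M[F]_(p, q)) :
  (M <= V)%MS -> (M^T <= U^T)%MS -> U *m core_mx U V M *m V = M.
Proof.
move=> MV MU; have UM : U *m (pinvmx U^T)^T *m M = M.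
  move: (pinvmx U^T) (mulmxKpV MU) => P MPU.
  by rewrite -[RHS]trmxK -MPU !trmx_mul !trmxK mulmxA.
by rewrite /core_mx [U *m _]mulmxA [U *m _]mulmxA UM mulmxKpV.
Qed.

Definition offdiag_col K t (A : 'M[F]_(2 ^ K * t)) d i : 'M[F]_(2 ^ K * t, 2 ^ d * t) :=
  \matrix_(r, b) if (i * (2 ^ d * t) <= r < i.+1 * (2 ^ d * t))%N then 0
                 else getn A r (i * (2 ^ d * t) + b).

Lemma mxrank_offdiag_col K t s (A : 'M[F]_(2 ^ K * t)) d i :
  quasiseparable s A -> (\rank (offdiag_col A d i) <= 2 * s)%N.
Proof.
move=> qsA; set m := (2 ^ d * t)%N.
apply: (mxrank_qs_offdiag (k1 := i * m) (k2 := i.+1 * m) (f := id)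
  (g := fun b => (i * m + b)%N) qsA) => r b.
rewrite mxE /=; have := ltn_ord b; rewrite -/m mulSn; case: ifP; case: ifP => //; lia.
Qed.

Lemma blk_sub_offdiag_col K t (A : 'M[F]_(2 ^ K * t)) d i j :
  j != i -> (blk t A d j i <= offdiag_col A d i)%MS.
Proof.
move=> ji; set m := (2 ^ d * t)%N.
apply: (submx_reindex (f := fun a => (j * m + a)%N)) => a b.
rewrite mxE (getn_mx _ _ (fun r b => if (i * m <= r < i.+1 * m)%N then 0
                                      else getn A r (i * m + b))).
have := ltn_ord a; have := ltn_ord b; rewrite -/m => b_lt a_lt.
rewrite b_lt andbT; case: ltnP => r_lt; last by rewrite getn_out ?r_lt.
by rewrite ifF //; apply/negbTE; move: ji; rewrite mulSn; nia.
Qed.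

Lemma submx_offdiag_col_child K t (A : 'M[F]_(2 ^ K * t)) d i e
    (M : 'M[F]_(2 ^ K * t, 2 ^ d * t)) :
  (e < 2)%N ->
  (forall r b, M r b =
     if (i * (2 ^ d.+1 * t) <= r < i.+1 * (2 ^ d.+1 * t))%N then 0
     else getn A r (i * (2 ^ d.+1 * t) + e * (2 ^ d * t) + b)) ->
  (M <= offdiag_col A d (2 * i + e))%MS.
Proof.
move=> e_lt DM; rewrite expnS -mulnA in DM; set m := (2 ^ d * t)%N in DM *.
apply: (submx_reindex
  (f := fun r => if (i * (2 * m) <= r < i.+1 * (2 * m))%N then (2 ^ K * t)%N else r)) => r b.
rewrite DM (getn_mx _ _ (fun r b => if ((2 * i + e) * m <= r < (2 * i + e).+1 * m)%N then 0
                                     else getn A r ((2 * i + e) * m + b))).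
have := ltn_ord r; have := ltn_ord b; rewrite -/m => b_lt r_lt.
case: ifP => [_|r_out]; first by rewrite ltnn.
rewrite r_lt b_lt ifF; first by congr getn; lia.
by apply/negbTE; move: r_out; rewrite !mulSn; nia.
Qed.

Lemma lsubmx_offdiag_col K t (A : 'M[F]_(2 ^ K * t)) d i :
  (lsubmx (castmx (erefl, bsS d t) (offdiag_col A d.+1 i)) <= offdiag_col A d (2 * i))%MS.
Proof.
rewrite -[(2 * i)%N]addn0; apply: (submx_offdiag_col_child (e := 0)) => // r b.
by rewrite mxE castmxE mxE /= mul0n addn0.
Qed.

Lemma rsubmx_offdiag_col K t (A : 'M[F]_(2 ^ K * t)) d i :
  (rsubmx (castmx (erefl, bsS d t) (offdiag_col A d.+1 i)) <= offdiag_col A d (2 * i + 1))%MS.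
Proof.
apply: (submx_offdiag_col_child (e := 1)) => // r b.
by rewrite mxE castmxE mxE /= mul1n addnA.
Qed.

Lemma hss_U_S K t (UK : nat -> 'M[F]_t) R d i :
  hss_U K UK R d.+1 i = castmx (esym (bsS d t), erefl)
    (col_mx (hss_U K UK R d (2 * i) *m R (K - d)%N (2 * i)%N)
            (hss_U K UK R d (2 * i + 1) *m R (K - d)%N (2 * i + 1)%N)).
Proof. by []. Qed.

Lemma hss_V_S K t (VK : nat -> 'M[F]_t) W d i :
  hss_V K VK W d.+1 i = castmx (erefl, esym (bsS d t))
    (row_mx (W (K - d)%N (2 * i)%N *m hss_V K VK W d (2 * i))
            (W (K - d)%N (2 * i + 1)%N *m hss_V K VK W d (2 * i + 1))).
Proof. by []. Qed.

Lemma hss_U_tr K t (VK : nat -> 'M[F]_t) (W : nat -> nat -> 'M[F]_t) d i :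
  hss_U K (fun i => (VK i)^T) (fun k i => (W k i)^T) d i = (hss_V K VK W d i)^T.
Proof.
elim: d i => [|d IH] i; first by rewrite /= trmx_cast.
by rewrite hss_U_S hss_V_S trmx_cast tr_row_mx !trmx_mul !IH.
Qed.

Lemma hss_U_dsubmx K t (UK : nat -> 'M[F]_t) R d i :
  dsubmx (castmx (bsS d t, erefl) (hss_U K UK R d.+1 i))
  = hss_U K UK R d (2 * i + 1) *m R (K - d)%N (2 * i + 1)%N.
Proof. by rewrite hss_U_S castmxKV col_mxKd. Qed.

Lemma blk_tr n t (A : 'M[F]_n) d i j : (blk t A d i j)^T = blk t A^T d j i.
Proof. by apply/matrixP => a b; rewrite !mxE getn_tr. Qed.

Section Generators.
Variables (K t : nat) (A : 'M[F]_(2 ^ K * t)).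
Hypothesis rank_offdiag_col : forall d i, (\rank (offdiag_col A d i) <= t)%N.

Definition row_gen d i : 'M[F]_(t, 2 ^ d * t) := pad_base t (offdiag_col A d i).

Lemma offdiag_col_sub_row_gen d i : (offdiag_col A d i <= row_gen d i)%MS.
Proof. exact: sub_pad_base. Qed.

Definition leaf_gen i : 'M[F]_t := castmx (erefl, bs0 t) (row_gen 0 i).

Definition transfer_gen k j : 'M[F]_t :=
  let V := castmx (erefl, bsS (K - k) t) (row_gen (K - k).+1 j./2) in
  (if odd j then rsubmx V else lsubmx V) *m pinvmx (row_gen (K - k) j).

Lemma hss_V_gen d i : (d <= K)%N -> hss_V K leaf_gen transfer_gen d i = row_gen d i.
Proof.
elim: d i => [|d IH] i dK; first by rewrite /= castmx_comp castmx_id.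
have {}IH j := IH j (ltnW dK).
rewrite hss_V_S !IH /transfer_gen (subKn (ltnW dK)).
have -> : odd (2 * i) = false by rewrite mul2n odd_double.
have -> : odd (2 * i + 1) = true by rewrite addn1 mul2n /= odd_double.
have -> : (2 * i)./2 = i by rewrite mul2n doubleK.
have -> : (2 * i + 1)./2 = i by rewrite addn1 mul2n /= uphalf_double.
set V := castmx (erefl, bsS d t) (row_gen d.+1 i).
have V_sub : (V <= castmx (erefl, bsS d t) (offdiag_col A d.+1 i))%MS.
  exact/castmx_submx/pad_base_sub.
rewrite !mulmxKpV ?hsubmxK ?castmx_comp ?castmx_id //.
- exact: submx_trans (rsubmxS V_sub)
                     (submx_trans (rsubmx_offdiag_col _ _ _) (offdiag_col_sub_row_gen _ _)).
- exact: submx_trans (lsubmxS V_sub)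
                     (submx_trans (lsubmx_offdiag_col _ _ _) (offdiag_col_sub_row_gen _ _)).
Qed.

Lemma offdiag_col_sub_hss_V d i :
  (d <= K)%N -> (offdiag_col A d i <= hss_V K leaf_gen transfer_gen d i)%MS.
Proof. by move=> dK; rewrite hss_V_gen ?offdiag_col_sub_row_gen. Qed.

End Generators.

Lemma has_HSS_offdiag_col K t (A : 'M[F]_(2 ^ K * t)) :
  (forall d i, \rank (offdiag_col A d i) <= t)%N ->
  (forall d i, \rank (offdiag_col A^T d i) <= t)%N -> has_HSS A.
Proof.
move=> rA rAT.
pose UK i := (leaf_gen A^T i)^T; pose R k i := (transfer_gen A^T k i)^T.
pose U := hss_U K UK R; pose V := hss_V K (leaf_gen A) (transfer_gen A).
have blk_factor d j j' : (d <= K)%N -> j != j' ->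
    blk t A d j j' = U d j *m core_mx (U d j) (V d j') (blk t A d j j') *m V d j'.
  move=> dK jj'; rewrite core_mxK // /U /V /UK /R.
    exact: submx_trans (blk_sub_offdiag_col A d jj') (offdiag_col_sub_hss_V rA _ dK).
  rewrite hss_U_tr trmxK blk_tr.
  apply: submx_trans (blk_sub_offdiag_col A^T d _) (offdiag_col_sub_hss_V rAT _ dK).
  by rewrite eq_sym.
pose partner j := if odd j then j.-1 else j.+1.
exists UK, (leaf_gen A), (fun i => castmx (bs0 t, bs0 t) (blk t A 0 i i)), R, (transfer_gen A).
exists (fun k j => core_mx (U (K - k)%N j) (V (K - k)%N (partner j))
                          (blk t A (K - k) j (partner j))).
split => [i _|k k_in i _]; first by rewrite castmxK.
have -> : partner (2 * i)%N = (2 * i + 1)%N by rewrite /partner mul2n odd_double addn1.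
have -> : partner (2 * i + 1)%N = (2 * i)%N by rewrite /partner addn1 mul2n /= odd_double.
by split; apply: blk_factor; rewrite ?leq_subr //; lia.
Qed.

Lemma has_HSS_qs K t s (A : 'M[F]_(2 ^ K * t)) :
  (2 * s <= t)%N -> quasiseparable s A -> has_HSS A.
Proof.
move=> st qsA; apply: has_HSS_offdiag_col => d i.
  exact: leq_trans (mxrank_offdiag_col _ _ qsA) st.
exact: leq_trans (mxrank_offdiag_col _ _ (quasiseparable_tr qsA)) st.
Qed.

Lemma sep_mx_blk K t (A : 'M[F]_(2 ^ K * t)) :
  sep_mx A = row_mx (blk t A 1 1 0)
                    (lsubmx (dsubmx (castmx (bsS 1 t, bsS 1 t) (blk t A 2 0 1)))).
Proof.
rewrite /sep_mx; congr row_mx; apply/matrixP => i j; rewrite !mxE.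
  by congr getn; rewrite mul1n.
by rewrite castmxE mxE; congr getn; rewrite mul1n.
Qed.

Lemma mxrank_sep_mx_hss K t (A : 'M[F]_(2 ^ K * t)) :
  (3 <= K)%N -> has_HSS A -> (\rank (sep_mx A) <= t)%N.
Proof.
move=> K3 [UK [VK [D [R [W [B [_ hA]]]]]]].
have [_ A10] := hA (K - 1)%N ltac:(lia) 0%N (expn_gt0 _ _).
have [A01 _] := hA (K - 2)%N ltac:(lia) 0%N (expn_gt0 _ _).
rewrite (_ : K - (K - 1) = 1)%N ?muln0 ?add0n in A10; last by lia.
rewrite (_ : K - (K - 2) = 2)%N ?muln0 ?add0n in A01; last by lia.
set U11 := hss_U K UK R 1 1.
rewrite sep_mx_blk.
have [G1 ->] : exists G1, blk t A 1 1 0 = U11 *m G1 by eexists; rewrite A10 -mulmxA.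
have [G2 ->] : exists G2,
    lsubmx (dsubmx (castmx (bsS 1 t, bsS 1 t) (blk t A 2 0 1))) = U11 *m G2.
  eexists; rewrite A01 !castmx_mulmx castmx_id -!mul_dsub_mx -mulmx_lsub hss_U_dsubmx.
  by rewrite -!mulmxA.
by rewrite -mul_mx_row; apply: leq_trans (mxrankM_maxl _ _) (rank_leq_col _).
Qed.

(* Identity blocks of size s at rows 2t.., columns 0.. and at rows 2t+s..,
   columns 4t..: each off-diagonal cut of the matrix meets only one of them,
   whereas [sep_mx] contains both. *)
Definition sharp_entry t s r c : bool :=
  [|| (r == 2 * t + c) && (c < s)
    | [&& 2 * t + s <= r, r < 2 * t + 2 * s & c + s == r + 2 * t]]%N.

Definition sharp_mx K t s : 'M[F]_(2 ^ K * t) := \matrix_(r, c) (sharp_entry t s r c)%:R.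

Lemma getn_sharp_mx K t s r c :
  getn (sharp_mx K t s) r c = [&& r < 2 ^ K * t, c < 2 ^ K * t & sharp_entry t s r c]%N%:R.
Proof.
rewrite (getn_mx _ _ (fun r c => (sharp_entry t s r c)%:R)).
by case: (r < _)%N; case: (c < _)%N.
Qed.

Lemma quasiseparable_sharp_mx K t s : (s <= t)%N -> quasiseparable s (sharp_mx K t s).
Proof.
move=> st k /andP[k_gt0 k_le].
split; (apply: leq_trans (_ : _ <= \rank (1%:M : 'M[F]_s))%N _; last by rewrite mxrank1).
  apply: (mxrank_reindex
    (f := fun i => if (2 * t + s <= i)%N then (i - (2 * t + s))%N else s)
    (g := fun j => if (4 * t <= k + j)%N then (k + j - 4 * t)%N else s)) => i j.
  have := ltn_ord i; have := ltn_ord j => j_lt i_lt.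
  rewrite mxE getn_sharp_mx getn1 /sharp_entry.
  by case: (leqP (2 * t + s) i) => ?; case: (leqP (4 * t) (k + j)) => ? /=; congr _%:R; lia.
apply: (mxrank_reindex
  (f := fun i => if (2 * t <= k + i)%N then (k + i - 2 * t)%N else s) (g := id)) => i j.
have := ltn_ord i; have := ltn_ord j => j_lt i_lt.
rewrite mxE getn_sharp_mx getn1 /sharp_entry.
by case: (leqP (2 * t) (k + i)) => ? /=; congr _%:R; lia.
Qed.

Lemma mxrank_sep_sharp_mx K t s :
  (3 <= K)%N -> (s <= t)%N -> \rank (sep_mx (sharp_mx K t s)) = (2 * s)%N.
Proof.
move=> K3 st; apply/eqP.
rewrite eqn_leq (mxrank_sep_mx_qs (quasiseparable_sharp_mx st)) /=.
have n_ge : (8 * t <= 2 ^ K * t)%N by rewrite leq_mul2r (leq_pexp2l (isT : 0 < 2)%N K3) orbT.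
rewrite -{1}(mxrank1 F (2 * s)).
apply: (mxrank_reindex (f := id)
  (g := fun j => if (j < s)%N then j : nat else (2 * t + (j - s))%N)) => i j /=.
have := ltn_ord i; have := ltn_ord j => j_lt i_lt.
set n := (2 ^ K * t)%N in n_ge *.
rewrite mxE -val_eqE /= getn_sep_mx; try lia; last by case: ifP; lia.
case: (ltnP j s) => js; [rewrite ifT | rewrite ifF]; try lia;
  by rewrite getn_sharp_mx /sharp_entry; congr _%:R; lia.
Qed.

End HSS.

Lemma sum_exp2 K : (\sum_(1 <= k < K.+1) 2 ^ k + 2 = 2 ^ K.+1)%N.
Proof.
elim: K => [|K IH]; first by rewrite big_geq.
by rewrite big_nat_recr //= addnAC IH !expnS; lia.
Qed.

Lemma hss_size_2s K s : (1 <= K)%N ->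
  (hss_size K (2 * s) + 40 * s ^ 2 = 18 * (2 ^ K * (2 * s)) * s)%N.
Proof.
move=> K1; have := sum_exp2 K; rewrite /hss_size big_ltn // expn1 expnS.
set x := (2 ^ K)%N; set S := (\sum_(2 <= k < K.+1) 2 ^ k)%N => sumS.
have -> : (3 * x + 2 * S + (2 + S) = 9 * x - 10)%N by lia.
have : (10 <= 9 * x)%N by lia.
nia.
Qed.

Theorem mainTheorem3 (F : fieldType) :
  (forall (K t s : nat) (A : 'M[F]_(2 ^ K * t)),
     (2 * s <= t)%N -> quasiseparable s A -> has_HSS A) /\
  (forall (K s : nat), (1 <= K)%N ->
     (hss_size K (2 * s) + 40 * s ^ 2 = 18 * (2 ^ K * (2 * s)) * s)%N) /\
  (forall (K t : nat) (A : 'M[F]_(2 ^ K * t)),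
     (3 <= K)%N -> has_HSS A -> (\rank (sep_mx A) <= t)%N) /\
  (forall (K t s : nat) (A : 'M[F]_(2 ^ K * t)),
     (3 <= K)%N -> quasiseparable s A -> (\rank (sep_mx A) <= 2 * s)%N) /\
  (forall (K t s : nat), (3 <= K)%N -> (s <= t)%N ->
     exists A : 'M[F]_(2 ^ K * t),
       quasiseparable s A /\ \rank (sep_mx A) = (2 * s)%N /\
       (has_HSS A -> (2 * s <= t)%N)).
Proof.
split; first by move=> K t s A; exact: has_HSS_qs.
split; first exact: hss_size_2s.
split; first by move=> K t A; exact: mxrank_sep_mx_hss.
split; first by move=> K t s A _; exact: mxrank_sep_mx_qs.
move=> K t s K3 st; exists (sharp_mx F K t s).
split; first exact: quasiseparable_sharp_mx.
split; first exact: mxrank_sep_sharp_mx.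
by rewrite -(mxrank_sep_sharp_mx F K3 st); exact: mxrank_sep_mx_hss.
Qed.
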